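(* Let $\mathcal{C}$ be a binary linear code of length $n$, and map each codeword $\underline c=(c_0,\dots,c_{n-1})$ to its bipolar image $\underline s\in\{-1,+1\}^n\subset\mathbb{R}^n$, $s_t=1-2c_t$. Then the bipolar images of any four distinct codewords of $\mathcal{C}$ either are the vertices of a (non-degenerate) tetrahedron, i.e. are affinely independent in $\mathbb{R}^n$, or lie in a common two-dimensional plane and are the vertices of a rectangle. *)

From HB Require Import structures.
From mathcomp Require Import all_boot all_order all_algebra all_fingroup.
From mathcomp Require Import all_reals.
Set Implicit Arguments. Unset Strict Implicit. Unset Printing Implicit Defensive.
Import Order.TTheory GRing.Theory Num.Theory.
Local Open Scope ring_scope.

(* Binary codewords of length n are row vectors 'rV['F_2]_n; a binary linear
   code is an 'F_2-subspace C : {vspace 'rV['F_2]_n}. *)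

Definition bipolar (R : realType) (n : nat) (c : 'rV['F_2]_n) : 'rV[R]_n :=
  \row_(t < n) (1 - 2 * (nat_of_ord (c 0 t))%:R).

Definition dotv (R : realType) (n : nat) (u v : 'rV[R]_n) : R :=
  \sum_(t < n) u 0 t * v 0 t.

Definition diffmx (R : realType) (n : nat) (p : 'I_4 -> 'rV[R]_n) : 'M[R]_(3, n) :=
  \matrix_(i < 3) (p (lift ord0 i) - p ord0).

Definition affinely_independent4 (R : realType) (n : nat) (p : 'I_4 -> 'rV[R]_n) :=
  \rank (diffmx p) = 3%N.

Definition coplanar2 (R : realType) (n : nat) (p : 'I_4 -> 'rV[R]_n) :=
  \rank (diffmx p) = 2%N.

(* The four points, in some order A B C D (cyclic), are the vertices of a
   rectangle: ABCD is a parallelogram (B - A = C - D) with a right angle at A. *)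
Definition is_rectangle4 (R : realType) (n : nat) (p : 'I_4 -> 'rV[R]_n) :=
  exists s : 'S_4,
    let A := p (s 0) in let B := p (s 1) in
    let C := p (s 2) in let D := p (s 3) in
    B - A = C - D /\ dotv (B - A) (D - A) = 0.

From Pilot Require Import Defs.
From HB Require Import structures.
From mathcomp Require Import all_boot all_order all_algebra all_fingroup.
From mathcomp Require Import all_reals.
From mathcomp Require Import ring lra.
Set Implicit Arguments. Unset Strict Implicit. Unset Printing Implicit Defensive.
Import Order.TTheory GRing.Theory Num.Theory.
Local Open Scope ring_scope.

(* Write s_j for the bipolar image of c_j and b_j for the indicator of the
   positions where c_j differs from c_0. Then s_j - s_0 is b_j scaled
   coordinatewise by the nonzero factors -2 s_0, so the affine rank of the four
   points is the rank of the 0/1 matrix with rows b_1, b_2, b_3. These rows are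
   nonzero and pairwise distinct, hence any two of them are independent and the
   rank is 2 or 3. In a nontrivial relation x b_1 + y b_2 + z b_3 = 0 all
   coefficients are nonzero and two of them, say x and y, have the same sign;
   reading the relation coordinatewise then forces b_3 to be the disjoint union
   of b_1 and b_2, i.e. s_1 - s_0 = s_3 - s_2 with s_1 - s_0 orthogonal to
   s_2 - s_0: a rectangle. *)

Definition differ n (c c' : 'rV['F_2]_n) (t : 'I_n) : bool := c 0 t != c' 0 t.

Definition disjoint_union n (u v w : 'I_n -> bool) :=
  forall t, ~~ (u t && v t) /\ w t = u t || v t.

Lemma F2_cases (x : 'F_2) : x = 0 \/ x = 1.
Proof. by case: x => [[|[|k]] Hk] //; [left|right]; apply: val_inj. Qed.

Lemma differ_xor n (c c' c'' : 'rV['F_2]_n) t :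
  differ c c' t = (differ c c'' t != differ c' c'' t).
Proof.
rewrite /differ.
by case: (F2_cases (c 0 t)) => ->; case: (F2_cases (c' 0 t)) => ->;
  case: (F2_cases (c'' 0 t)) => ->.
Qed.

Lemma differP n (c c' : 'rV['F_2]_n) : reflect (exists t, differ c c' t) (c != c').
Proof.
apply: (iffP idP) => [|[t]]; last by apply: contraNneq => ->; rewrite /differ eqxx.
move=> neq_cc'; apply/existsP; move: neq_cc'; apply: contraNT => /existsPn eq_cc'.
by apply/eqP/rowP => t; apply/eqP/negPn; exact: eq_cc'.
Qed.

Definition indicator_mx (R : pzSemiRingType) m n (b : 'I_m -> 'I_n -> bool) :
  'M[R]_(m, n) := \matrix_(i, t) (b i t)%:R.

Section Bipolar.
Variables (R : realType) (n : nat).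

Lemma bipolarE (c : 'rV['F_2]_n) t : bipolar R c 0 t = if c 0 t == 0 then 1 else -1.
Proof.
by rewrite mxE; case: (F2_cases (c 0 t)) => -> /=; rewrite ?mulr0 ?mulr1 ?subr0 //; lra.
Qed.

Lemma bipolar_neq0 (c : 'rV['F_2]_n) t : bipolar R c 0 t != 0.
Proof. by rewrite bipolarE; case: ifP => _; rewrite ?oppr_eq0 oner_eq0. Qed.

Lemma bipolar_sub (c c' : 'rV['F_2]_n) t :
  (bipolar R c - bipolar R c') 0 t = -2 * bipolar R c' 0 t * (differ c c' t)%:R.
Proof.
rewrite mxE [X in _ + X]mxE !bipolarE /differ.
by case: (F2_cases (c 0 t)) => ->; case: (F2_cases (c' 0 t)) => -> /=; lra.
Qed.

Lemma bipolar_rectangle (c0 c1 c2 c3 : 'rV['F_2]_n) :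
  disjoint_union (differ c1 c0) (differ c3 c0) (differ c2 c0) ->
  bipolar R c1 - bipolar R c0 = bipolar R c2 - bipolar R c3 /\
  dotv (bipolar R c1 - bipolar R c0) (bipolar R c3 - bipolar R c0) = 0.
Proof.
move=> c2_union; split.
  apply/rowP => t.
  have -> : (bipolar R c2 - bipolar R c3) 0 t =
            (bipolar R c2 - bipolar R c0) 0 t - (bipolar R c3 - bipolar R c0) 0 t.
    by rewrite !mxE; ring.
  rewrite !bipolar_sub; have [] := c2_union t.
  by case: (differ c1 c0 t); case: (differ c3 c0 t) => //= _ -> /=; ring.
apply: big1 => t _; rewrite !bipolar_sub; have [] := c2_union t.
by case: (differ c1 c0 t); case: (differ c3 c0 t) => //= _ _; ring.
Qed.

Lemma is_rectangle4_bipolar (c : 'I_4 -> 'rV['F_2]_n) (s : 'S_4) :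
  disjoint_union (differ (c (s 1)) (c (s 0))) (differ (c (s 3)) (c (s 0)))
                 (differ (c (s 2)) (c (s 0))) ->
  is_rectangle4 (fun i => bipolar R (c i)).
Proof. by move=> c_union; exists s; apply: bipolar_rectangle. Qed.

Lemma rank_diffmx_bipolar (c : 'I_4 -> 'rV['F_2]_n) :
  \rank (Defs.diffmx (fun i => bipolar R (c i))) =
  \rank (indicator_mx R (fun i => differ (c (lift ord0 i)) (c ord0))).
Proof.
pose d := \row_t (-2 * bipolar R (c ord0) 0 t).
have -> : Defs.diffmx (fun i => bipolar R (c i)) =
          indicator_mx R (fun i => differ (c (lift ord0 i)) (c ord0)) *m diag_mx d.
  by apply/matrixP => i t; rewrite mul_mx_diag [LHS]mxE bipolar_sub !mxE mulrC.
apply: mxrankMfree; rewrite row_free_unit unitmxE det_diag unitfE.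
by apply/prodf_neq0 => t _; rewrite mxE mulf_neq0 ?bipolar_neq0 //; apply/eqP; lra.
Qed.

End Bipolar.

Lemma row_free_kerP (F : fieldType) m n (A : 'M[F]_(m, n)) :
  reflect (forall u : 'rV_m, u *m A = 0 -> u = 0) (row_free A).
Proof.
apply: (iffP idP) => [freeA u /eqP | ker0]; first by rewrite mulmx_free_eq0 // => /eqP.
rewrite -kermx_eq0; apply: contraT => /rowV0Pn [u /sub_kermxP uA0].
by rewrite (ker0 u uA0) eqxx.
Qed.

Lemma bool_rows_independent (R : pzRingType) n (u v : 'I_n -> bool) (x y : R) :
  (exists t, u t) -> (exists t, v t) -> (exists t, u t != v t) ->
  (forall t, x * (u t)%:R + y * (v t)%:R = 0) -> x = 0 /\ y = 0.
Proof.
move=> [tu ut] [tv vt] [t uvt] rel.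
have := rel t; case: (u t) (v t) uvt => [] [] //= _; rewrite mulr0 ?addr0 ?add0r mulr1 => zero.
  by split=> //; have := rel tv; rewrite vt zero mul0r add0r mulr1.
by split=> //; have := rel tu; rewrite ut zero mul0r addr0 mulr1.
Qed.

Lemma some_pair_mul_gt0 (R : realDomainType) (x y z : R) :
  x != 0 -> y != 0 -> z != 0 -> [|| 0 < x * y, 0 < y * z | 0 < x * z].
Proof.
move=> x0 y0 z0; apply: contraT; rewrite !negb_or -!leNgt => /and3P[xy yz xz].
have sqr_le0 : (x * y * z) ^+ 2 <= 0.
  have -> : (x * y * z) ^+ 2 = x * y * (y * z) * (x * z) by ring.
  by rewrite mulr_ge0_le0 // mulr_le0.
have : (x * y * z) ^+ 2 == 0 by rewrite eq_le sqr_le0 sqr_ge0.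
by rewrite expf_eq0 /= (negbTE (mulf_neq0 (mulf_neq0 x0 y0) z0)).
Qed.

Lemma disjoint_union_of_relation (R : realDomainType) n (u v w : 'I_n -> bool) (x y z : R) :
  0 < x * y -> z != 0 -> (exists t, u t != v t) ->
  (forall t, x * (u t)%:R + y * (v t)%:R + z * (w t)%:R = 0) ->
  disjoint_union u v w.
Proof.
move=> xy z0 [s uvs] rel.
have w_of_uv t : u t || v t -> w t.
  move=> uvt; apply: contraT => /negbTE wt; have := rel t; rewrite wt.
  by case: (u t) (v t) uvt => [] [] //= _;
    rewrite ?mulr0 ?mulr1 ?addr0 ?add0r => e; move: xy; nra.
have uv_of_w t : w t -> u t || v t.
  move=> wt; apply: contraTT z0 => /norP[/negbTE ut /negbTE vt].
  by have := rel t; rewrite ut vt wt /= => e; apply/negPn/eqP; lra.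
have disj t : ~~ (u t && v t).
  apply/negP => /andP[ut vt]; have := rel t; rewrite ut vt w_of_uv ?ut //= => e_t.
  have ws : w s by apply: w_of_uv; case: (u s) (v s) uvs => [] [].
  by have := rel s; rewrite ws; case: (u s) (v s) uvs => [] [] //= _ e_s; move: xy; nra.
by move=> t; split; [exact: disj | apply/idP/idP; [exact: uv_of_w | exact: w_of_uv]].
Qed.

Lemma disjoint_union_of_dependent (R : realDomainType) n (u v w : 'I_n -> bool)
    (x y z : R) :
  (exists t, u t) -> (exists t, v t) -> (exists t, w t) ->
  (exists t, u t != v t) -> (exists t, u t != w t) -> (exists t, v t != w t) ->
  (forall t, x * (u t)%:R + y * (v t)%:R + z * (w t)%:R = 0) ->
  [|| x != 0, y != 0 | z != 0] ->
  disjoint_union u v w \/ disjoint_union v w u \/ disjoint_union u w v.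
Proof.
move=> u_nz v_nz w_nz uv uw vw rel nz.
have x0 : x != 0.
  apply: contraTneq nz => x0; have [-> ->] : y = 0 /\ z = 0.
    by apply: (bool_rows_independent v_nz w_nz vw) => t; have := rel t; rewrite x0 mul0r add0r.
  by rewrite x0 eqxx.
have y0 : y != 0.
  apply: contraTneq nz => y0; have [-> ->] : x = 0 /\ z = 0.
    by apply: (bool_rows_independent u_nz w_nz uw) => t; have := rel t; rewrite y0 mul0r addr0.
  by rewrite y0 eqxx.
have z0 : z != 0.
  apply: contraTneq nz => z0; have [-> ->] : x = 0 /\ y = 0.
    by apply: (bool_rows_independent u_nz v_nz uv) => t; have := rel t; rewrite z0 mul0r addr0.
  by rewrite z0 eqxx.
case/or3P: (some_pair_mul_gt0 x0 y0 z0) => [xy | yz | xz].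
- by left; apply: (disjoint_union_of_relation xy z0 uv).
- by right; left; apply: (disjoint_union_of_relation yz x0 vw) => t; rewrite -(rel t); ring.
- by right; right; apply: (disjoint_union_of_relation xz y0 uw) => t; rewrite -(rel t); ring.
Qed.

Lemma mxrank_ge2 (F : fieldType) m n (A : 'M[F]_(m, n)) (i k : 'I_m) :
  (forall a b, a *: row i A + b *: row k A = 0 -> a = 0 /\ b = 0) -> (2 <= \rank A)%N.
Proof.
move=> indep; pose f (j : 'I_2) := if j == ord0 then i else k.
have /eqP <- : row_free (rowsub f A).
  apply/row_free_kerP => u; rewrite mulmx_sum_row !big_ord_recl big_ord0 addr0 !row_rowsub.
  move/indep=> [u0 u1]; apply/rowP => j; rewrite mxE.
  by case: j => [[|[|//]] j2]; [rewrite -u0 | rewrite -u1]; congr (u 0 _); apply: val_inj.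
exact/mxrankS/rowsub_sub.
Qed.

Lemma indicator_mx3_rank (R : realFieldType) n (b : 'I_3 -> 'I_n -> bool) :
  (forall i, exists t, b i t) -> (forall i j, i != j -> exists t, b i t != b j t) ->
  row_free (indicator_mx R b) \/
  \rank (indicator_mx R b) = 2%N /\
  [\/ disjoint_union (b 0) (b 1) (b 2), disjoint_union (b 1) (b 2) (b 0)
     | disjoint_union (b 0) (b 2) (b 1)].
Proof.
move=> b_nz b_sep; set B := indicator_mx R b.
(* The ordinals produced by [big_ord_recl] are not convertible to ring literals. *)
have ord_vals : [/\ ord0 = 0 :> 'I_3, lift ord0 ord0 = 1 :> 'I_3
                 & lift ord0 (lift ord0 ord0) = 2 :> 'I_3].
  by split; apply: val_inj.
have B_rank_ge2 : (2 <= \rank B)%N.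
  apply: (@mxrank_ge2 _ _ _ _ 0 1) => x y /rowP e.
  apply: (bool_rows_independent (b_nz 0) (b_nz 1) (b_sep 0 1 isT)) => t.
  by have := e t; rewrite !mxE.
have [B_free | B_not_free] := boolP (row_free B); [by left | right].
have [k kB k_nz] : exists2 k : 'rV_3, k *m B = 0 & k != 0.
  by move: B_not_free; rewrite -kermx_eq0 => /rowV0Pn[k /sub_kermxP]; exists k.
split.
  by apply/eqP; rewrite eqn_leq B_rank_ge2 andbT -ltnS ltn_neqAle B_not_free rank_leq_row.
have rel t : k 0 0 * (b 0 t)%:R + k 0 1 * (b 1 t)%:R + k 0 2 * (b 2 t)%:R = 0.
  move/rowP/(_ t): kB; rewrite !mxE !big_ord_recl big_ord0 addr0 !mxE.
  by have [-> -> ->] := ord_vals; rewrite addrA.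
have k_nz3 : [|| k 0 0 != 0, k 0 1 != 0 | k 0 2 != 0].
  apply: contraNT k_nz; rewrite !negb_or !negbK => /and3P[/eqP k0 /eqP k1 /eqP k2].
  apply/eqP/rowP => i; rewrite mxE.
  by case: i => [[|[|[|//]]] ilt]; [rewrite -k0 | rewrite -k1 | rewrite -k2];
    congr (k 0 _); apply: val_inj.
have := disjoint_union_of_dependent (b_nz 0) (b_nz 1) (b_nz 2)
  (b_sep 0 1 isT) (b_sep 0 2 isT) (b_sep 1 2 isT) rel k_nz3.
by case=> [|[|]]; [apply: Or31 | apply: Or32 | apply: Or33].
Qed.

Theorem proposition4 (R : realType) (n : nat) (C : {vspace 'rV['F_2]_n})
    (c : 'I_4 -> 'rV['F_2]_n) :
  (forall i, c i \in C) -> injective c ->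
  affinely_independent4 (fun i => bipolar R (c i)) \/
  (coplanar2 (fun i => bipolar R (c i)) /\ is_rectangle4 (fun i => bipolar R (c i))).
Proof.
move=> _ c_inj.
rewrite /affinely_independent4 /coplanar2 rank_diffmx_bipolar.
pose b i := differ (c (lift ord0 i)) (c ord0).
have b_nz i : exists t, b i t.
  by apply/differP; apply: contra (neq_lift ord0 i) => /eqP/c_inj ->.
have b_sep i j : i != j -> exists t, b i t != b j t.
  move=> ij; have [t] : exists t, differ (c (lift ord0 i)) (c (lift ord0 j)) t.
    by apply/differP; apply: contra ij => /eqP/c_inj/lift_inj ->.
  by rewrite (differ_xor _ _ (c ord0)); exists t.
have [B_free | [rank2 unions]] := indicator_mx3_rank R b_nz b_sep; first by left; apply/eqP.
right; split=> //.
have lift_vals : [/\ ord0 = 0 :> 'I_4, lift ord0 0 = 1 :> 'I_4, lift ord0 1 = 2 :> 'I_4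
                  & lift ord0 2 = 3 :> 'I_4].
  by split; apply: val_inj.
have [l0 l1 l2 l3] := lift_vals; rewrite /b l1 l2 l3 l0 in unions.
case: unions => [b3_union | b1_union | b2_union].
- apply: (@is_rectangle4_bipolar R n c (tperm 2 3)).
  by rewrite tpermL tpermR !tpermD //; exact: b3_union.
- apply: (@is_rectangle4_bipolar R n c (tperm 1 2)).
  by rewrite tpermL tpermR !tpermD //; exact: b1_union.
- apply: (@is_rectangle4_bipolar R n c 1).
  by rewrite !perm1; exact: b2_union.
Qed.
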